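(* Let $(\ell_n)$, $(\sigma_{n,0})$, $(\sigma_{n,1})$, $(\sigma_{n,-1})$ ($n\in\mathbb N$) be sequences of strictly positive reals and $(\kappa_n)_{n\in\mathbb N}$ a sequence of reals. Put $\sigma_n=\max(\sigma_{n,-1},\sigma_{n,1})$ and assume $\sigma_n\le\sigma_{n,0}$ and $\kappa_n\ge0$ for all $n\in\mathbb N$, and $$\liminf_{n\to\infty}\frac{\ell_n}{n^2\sigma_{n,0}}=0 .$$ Let $x_0\in\mathbb R$ satisfy $\sigma_{1,-1}x_0\ge-\kappa_1$ (e.g. $x_0=0$). Then there exists a unique $x_1>0$ such that the sequence $(x_n)_{n\in\mathbb N}$ satisfying $$\ell_n = x_n\big(\sigma_{n,1}x_{n+1}+\sigma_{n,0}x_n+\sigma_{n,-1}x_{n-1}\big)+\kappa_n x_n,\qquad n\in\mathbb N,$$ is positive (i.e. $x_n>0$ for all $n\in\mathbb N$).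
   Context: $\mathbb N=\{1,2,3,\dots\}$. Since $\sigma_{n,1}>0$, the equation determines $x_{n+1}$ from $x_{n-1}$ and $x_n\ne0$, so the sequence is determined by $x_0$ and $x_1$ as long as no $x_n$ ($n\ge1$) vanishes. *)

From Stdlib Require Import Reals Lra Lia.
Open Scope R_scope.

Definition is_liminf (u : nat -> R) (l : R) : Prop :=
  (forall eps : R, 0 < eps -> exists N : nat, forall n : nat, (N <= n)%nat -> l - eps < u n) /\
  (forall eps : R, 0 < eps -> forall N : nat, exists n : nat, (N <= n)%nat /\ u n < l + eps).

(* Solving  ell k = x_k (s1 k x_{k+1} + s0 k x_k + sm1 k x_{k-1}) + kappa k x_k
   for x_{k+1}, given a = x_{k-1} and b = x_k (b <> 0, s1 k > 0). *)
Definition rec_next (ell s0 s1 sm1 kappa : nat -> R) (k : nat) (a b : R) : R :=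
  (ell k / b - kappa k - s0 k * b - sm1 k * a) / s1 k.

(* rec_pair ... n = (x_n, x_{n+1}) *)
Fixpoint rec_pair (ell s0 s1 sm1 kappa : nat -> R) (x0 x1 : R) (n : nat) : R * R :=
  match n with
  | O => (x0, x1)
  | S m => let (a, b) := rec_pair ell s0 s1 sm1 kappa x0 x1 m in
           (b, rec_next ell s0 s1 sm1 kappa (S m) a b)
  end.

Definition rec_seq (ell s0 s1 sm1 kappa : nat -> R) (x0 x1 : R) (n : nat) : R :=
  fst (rec_pair ell s0 s1 sm1 kappa x0 x1 n).

(* Write X u for the solution with x_1 = u.  Two facts drive the proof.
   - Energy bound: if x_n > 0, x_{n+1} >= 0 and kappa_n + sigma_{n,-1} x_{n-1} >= 0,
     then sigma_{n,0} x_n^2 <= ell_n.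
   - Comparison: for 0 < u < v with both solutions positive up to index k, the
     signed gap (-1)^(n+1) (X v n - X u n) grows with increments >= v - u
     (a discrete convexity argument using sigma_{n,1}, sigma_{n,-1} <= sigma_{n,0}).
   Existence: classify u by the parity of the index of the first non-positive
   term.  Both classes are nonempty (u = 0, u large), open (the exit index is
   continuous in u up to a jump by 2, because a small positive x_n is followed
   by a large x_{n+1} and a negative x_{n+2}), and the odd class lies below the
   even one (comparison).  By connectedness of R some u lies in neither class,
   i.e. its solution is positive.
   Uniqueness: for two positive solutions, comparison and the energy bound give
   ell_n / (n^2 sigma_{n,0}) >= (v - u)^2 / 4, contradicting liminf = 0. *)

From Stdlib Require Import Reals Lra Lia Classical.
Open Scope R_scope.

Definition near (s : R) (P : R -> Prop) : Prop :=
  exists d, 0 < d /\ forall y, Rabs (y - s) < d -> P y.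

Lemma near_weaken s (P Q : R -> Prop) :
  (forall y, P y -> Q y) -> near s P -> near s Q.
Proof.
  intros HPQ [d [Hd H]]. exists d. split; [exact Hd|]. intros y Hy. apply HPQ, H, Hy.
Qed.

Lemma near_and s (P Q : R -> Prop) :
  near s P -> near s Q -> near s (fun y => P y /\ Q y).
Proof.
  intros [d1 [Hd1 H1]] [d2 [Hd2 H2]].
  exists (Rmin d1 d2). split; [now apply Rmin_pos|].
  intros y Hy. pose proof (Rmin_l d1 d2). pose proof (Rmin_r d1 d2).
  split; [apply H1 | apply H2]; lra.
Qed.

Lemma near_cont f s eps :
  continuity_pt f s -> 0 < eps -> near s (fun y => Rabs (f y - f s) < eps).
Proof.
  intros Hf Heps. destruct (Hf eps Heps) as [d [Hd H]].
  exists d. split; [exact Hd|]. intros y Hy.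
  destruct (Req_dec y s) as [->|Hne].
  - rewrite Rminus_diag, Rabs_R0. exact Heps.
  - apply (H y). split; [split; [exact I | auto] | exact Hy].
Qed.

Lemma near_lt f s c : continuity_pt f s -> f s < c -> near s (fun y => f y < c).
Proof.
  intros Hf Hs. apply (near_weaken s (fun y => Rabs (f y - f s) < c - f s)).
  - intros y Hy. apply Rabs_def2 in Hy. lra.
  - apply near_cont; [exact Hf | lra].
Qed.

Lemma near_gt f s c : continuity_pt f s -> c < f s -> near s (fun y => c < f y).
Proof.
  intros Hf Hs. apply (near_weaken s (fun y => Rabs (f y - f s) < f s - c)).
  - intros y Hy. apply Rabs_def2 in Hy. lra.
  - apply near_cont; [exact Hf | lra].
Qed.

(* Connectedness of R: two nonempty open sets A and B with A entirely below B
   cannot cover R; the supremum of A lies in neither. *)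
Lemma gap_point (A B : R -> Prop) :
  (exists a, A a) -> (exists b, B b) -> (forall a b, A a -> B b -> a < b) ->
  (forall s, A s -> near s A) -> (forall s, B s -> near s B) ->
  exists s, ~ A s /\ ~ B s.
Proof.
  intros [a Ha] [b Hb] HAB HA HB.
  destruct (completeness A) as [s [Hub Hleast]].
  { exists b. intros x Hx. left. now apply HAB. }
  { now exists a. }
  exists s. split.
  - intros Hs. destruct (HA s Hs) as [d [Hd H]].
    assert (Hright : A (s + d / 2)) by (apply H; rewrite Rabs_right; lra).
    pose proof (Hub _ Hright). lra.
  - intros Hs. destruct (HB s Hs) as [d [Hd H]].
    destruct (classic (exists a', A a' /\ s - d < a')) as [[a' [Ha' Hlt]]|Hnone].
    + pose proof (Hub a' Ha').
      assert (Hb' : B a') by (apply H, Rabs_def1; lra).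
      pose proof (HAB a' a' Ha' Hb'). lra.
    + assert (s <= s - d); [|lra].
      apply Hleast. intros x Hx. destruct (Rle_or_lt x (s - d)) as [|Hgt]; [assumption|].
      exfalso. apply Hnone. now exists x.
Qed.

Lemma div_ge_of_mul_le a b c : 0 < c -> a * c <= b -> a <= b / c.
Proof.
  intros Hc H. replace a with (a * c / c) by (field; lra).
  unfold Rdiv. apply Rmult_le_compat_r; [left; now apply Rinv_0_lt_compat | exact H].
Qed.

Lemma mul_lt_of_lt_div a b c : 0 < c -> a < b / c -> c * a < b.
Proof.
  intros Hc H. replace b with (c * (b / c)) by (field; lra).
  now apply Rmult_lt_compat_l.
Qed.

Lemma sq_exceeds s l x : 0 < s -> 0 < l -> l / s + 1 <= x -> l < s * x ^ 2.
Proof.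
  intros Hs Hl Hx.
  assert (Hq : 0 < l / s) by (now apply Rdiv_lt_0_compat).
  assert (Hsx : l + s <= s * x).
  { replace (l + s) with (s * (l / s + 1)) by (field; lra). now apply Rmult_le_compat_l; [lra|]. }
  nra.
Qed.

Lemma increment_step a b s c d E0 E1 E2 :
  0 < a -> 0 < b -> a <= s -> b <= s -> s <= c -> 0 <= d ->
  d <= E1 -> d <= E1 - E0 -> a * E2 = (s + c) * E1 - b * E0 -> d <= E2 - E1.
Proof.
  intros Ha Hb Has Hbs Hsc Hd H1 H10 Hrel.
  apply (Rmult_le_reg_l a); [exact Ha|].
  assert (0 <= (s + c - a - b) * (E1 - d)) by (apply Rmult_le_pos; lra).
  assert (0 <= b * (E1 - E0 - d)) by (apply Rmult_le_pos; lra).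
  assert (0 <= (s + c - 2 * a) * d) by (apply Rmult_le_pos; lra).
  nra.
Qed.

Lemma positivity_step a b s c E0 E1 E2 :
  0 < a -> 0 < b -> b <= s -> 0 < c -> 0 < E1 -> E0 <= E1 ->
  a * E2 = (s + c) * E1 - b * E0 -> 0 < E2.
Proof.
  intros Ha Hb Hbs Hc H1 H10 Hrel.
  assert (0 <= (s - b) * E1) by (apply Rmult_le_pos; lra).
  assert (0 < c * E1) by (now apply Rmult_lt_0_compat).
  assert (0 <= b * (E1 - E0)) by (apply Rmult_le_pos; lra).
  nra.
Qed.

Section PositiveSolution.

Variables ell s0 s1 sm1 kappa : nat -> R.
Variable x0 : R.
Hypothesis Hell : forall n : nat, (1 <= n)%nat -> 0 < ell n.
Hypothesis Hs0 : forall n : nat, (1 <= n)%nat -> 0 < s0 n.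
Hypothesis Hs1 : forall n : nat, (1 <= n)%nat -> 0 < s1 n.
Hypothesis Hsm1 : forall n : nat, (1 <= n)%nat -> 0 < sm1 n.
Hypothesis Hsig : forall n : nat, (1 <= n)%nat -> Rmax (sm1 n) (s1 n) <= s0 n.
Hypothesis Hkappa : forall n : nat, (1 <= n)%nat -> 0 <= kappa n.
Hypothesis Hliminf : is_liminf (fun n : nat => ell n / (INR n ^ 2 * s0 n)) 0.
Hypothesis Hx0 : sm1 1%nat * x0 >= - kappa 1%nat.

Local Notation X := (rec_seq ell s0 s1 sm1 kappa x0).

Lemma X_0 u : X u 0 = x0. Proof. reflexivity. Qed.
Lemma X_1 u : X u 1 = u. Proof. reflexivity. Qed.

Lemma X_rec u m :
  X u (S (S m)) = rec_next ell s0 s1 sm1 kappa (S m) (X u m) (X u (S m)).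
Proof.
  unfold rec_seq; simpl. now destruct (rec_pair ell s0 s1 sm1 kappa x0 u m).
Qed.

Lemma sigma_le n : (1 <= n)%nat -> sm1 n <= s0 n /\ s1 n <= s0 n.
Proof.
  intros Hn. pose proof (Hsig n Hn). pose proof (Rmax_l (sm1 n) (s1 n)).
  pose proof (Rmax_r (sm1 n) (s1 n)). lra.
Qed.

Lemma recurrence u m : X u (S m) <> 0 ->
  ell (S m) = X u (S m) * (s1 (S m) * X u (S (S m)) + s0 (S m) * X u (S m)
                            + sm1 (S m) * X u m) + kappa (S m) * X u (S m).
Proof.
  intros Hu. assert (0 < s1 (S m)) by (apply Hs1; lia).
  rewrite X_rec. unfold rec_next. field. lra.
Qed.

Definition pos_upto (u : R) (k : nat) : Prop :=
  forall i, (1 <= i <= k)%nat -> 0 < X u i.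

Lemma pos_upto_S u k : pos_upto u (S k) <-> pos_upto u k /\ 0 < X u (S k).
Proof.
  split.
  - intros H. split; [intros i Hi; apply H; lia | apply H; lia].
  - intros [H HS] i Hi. destruct (Nat.eq_dec i (S k)) as [->|]; [exact HS | apply H; lia].
Qed.

Lemma pos_upto_le u j k : (j <= k)%nat -> pos_upto u k -> pos_upto u j.
Proof. intros Hjk H i Hi. apply H. lia. Qed.

(* The term kappa_n + sigma_{n,-1} x_{n-1} is nonnegative when x_{n-1} > 0,
   and for n = 1 by the assumption on x_0. *)
Lemma left_term_nonneg u m : (m = 0%nat \/ 0 < X u m) ->
  0 <= kappa (S m) + sm1 (S m) * X u m.
Proof.
  intros [->|Hm]; [rewrite X_0; lra|].
  assert (0 <= kappa (S m)) by (apply Hkappa; lia).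
  assert (0 < sm1 (S m)) by (apply Hsm1; lia).
  nra.
Qed.

(* Energy bound: a positive term followed by a nonnegative one satisfies
   sigma_{n,0} x_n^2 <= ell_n, since every other summand of ell_n is nonnegative. *)
Lemma energy_bound u m :
  0 < X u (S m) -> 0 <= X u (S (S m)) -> 0 <= kappa (S m) + sm1 (S m) * X u m ->
  s0 (S m) * X u (S m) ^ 2 <= ell (S m).
Proof.
  intros H1 H2 Hleft. rewrite (recurrence u m) by lra.
  assert (0 < s1 (S m)) by (apply Hs1; lia).
  assert (0 <= s1 (S m) * X u (S (S m))) by (apply Rmult_le_pos; lra).
  nra.
Qed.

Lemma energy_bound_pos u m : pos_upto u (S (S m)) -> s0 (S m) * X u (S m) ^ 2 <= ell (S m).
Proof.
  intros Hu. apply energy_bound; [apply Hu; lia | left; apply Hu; lia |].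
  apply left_term_nonneg. destruct m; [now left | right; apply Hu; lia].
Qed.

Lemma overshoot u m :
  0 < X u (S m) -> 0 <= kappa (S m) + sm1 (S m) * X u m ->
  ell (S m) < s0 (S m) * X u (S m) ^ 2 -> X u (S (S m)) < 0.
Proof.
  intros H1 Hleft Hexc. destruct (Rlt_or_le (X u (S (S m))) 0) as [|H2]; [assumption|].
  pose proof (energy_bound u m H1 H2 Hleft). lra.
Qed.

(* Above [threshold m B], the quotient ell_n / x_n forces x_{n+1} past the
   energy bound of index n+1 (given x_{n-1} <= B). *)
Definition threshold (m : nat) (B : R) : R :=
  s1 (S m) * (ell (S (S m)) / s0 (S (S m)) + 1) + kappa (S m) + s0 (S m) + sm1 (S m) * B.

Lemma threshold_pos m B : 0 <= B -> 0 < threshold m B.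
Proof.
  intros HB. unfold threshold.
  assert (0 < ell (S (S m)) / s0 (S (S m))) by (apply Rdiv_lt_0_compat; [apply Hell | apply Hs0]; lia).
  assert (0 < s1 (S m)) by (apply Hs1; lia).
  assert (0 < s0 (S m)) by (apply Hs0; lia).
  assert (0 < sm1 (S m)) by (apply Hsm1; lia).
  assert (0 <= kappa (S m)) by (apply Hkappa; lia).
  assert (0 < s1 (S m) * (ell (S (S m)) / s0 (S (S m)) + 1)) by (apply Rmult_lt_0_compat; lra).
  assert (0 <= sm1 (S m) * B) by (apply Rmult_le_pos; lra).
  lra.
Qed.

Lemma small_term_overshoot u m B :
  0 < X u (S m) <= 1 -> X u m <= B -> threshold m B * X u (S m) <= ell (S m) ->
  0 < X u (S (S m)) /\ X u (S (S (S m))) < 0.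
Proof.
  intros Hx HB Hthr.
  set (M := ell (S (S m)) / s0 (S (S m)) + 1).
  assert (HM : 1 < M).
  { assert (0 < ell (S (S m)) / s0 (S (S m))) by (apply Rdiv_lt_0_compat; [apply Hell | apply Hs0]; lia).
    unfold M; lra. }
  assert (Hbig : M <= X u (S (S m))).
  { pose proof (recurrence u m ltac:(lra)) as Heq. unfold threshold in Hthr; fold M in Hthr.
    assert (0 < s1 (S m)) by (apply Hs1; lia).
    assert (0 < s0 (S m)) by (apply Hs0; lia).
    assert (0 < sm1 (S m)) by (apply Hsm1; lia).
    assert (0 <= s0 (S m) * (X u (S m) * (1 - X u (S m)))).
    { apply Rmult_le_pos; [lra | apply Rmult_le_pos; lra]. }
    assert (0 <= sm1 (S m) * (X u (S m) * (B - X u m))).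
    { apply Rmult_le_pos; [lra | apply Rmult_le_pos; lra]. }
    assert (Hprod : 0 <= s1 (S m) * X u (S m) * (X u (S (S m)) - M)) by nra.
    assert (0 < s1 (S m) * X u (S m)) by (apply Rmult_lt_0_compat; lra).
    nra. }
  split; [lra|].
  apply overshoot.
  - lra.
  - apply left_term_nonneg. right. lra.
  - apply sq_exceeds; [apply Hs0 | apply Hell | ]; [lia | lia | exact Hbig].
Qed.

(* While x_1, ..., x_n are positive, x_n and x_{n+1} depend continuously on x_1:
   each step of the recurrence is a rational function of the previous two terms. *)
Lemma X_continuous u n : pos_upto u n ->
  continuity_pt (fun y => X y n) u /\ continuity_pt (fun y => X y (S n)) u.
Proof.
  revert u. induction n as [|n IH]; intros u Hu.
  - split; [apply continuity_pt_const; intros a b; reflexivity|].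
    apply (derivable_continuous_pt id), derivable_pt_id.
  - destruct (IH u) as [C0 C1]; [apply (pos_upto_le u n (S n)); [lia | exact Hu]|].
    split; [exact C1|].
    assert (Hcst : forall c, continuity_pt (fct_cte c) u).
    { intros c. apply continuity_pt_const. intros a b; reflexivity. }
    apply continuity_pt_locally_ext with
      (f := fun y => rec_next ell s0 s1 sm1 kappa (S n) (X y n) (X y (S n))) (a := 1);
      [lra | intros y _; symmetry; apply X_rec |].
    unfold rec_next.
    change (continuity_pt ((((fct_cte (ell (S n)) / (fun y => X y (S n)))
       - fct_cte (kappa (S n))) - (fct_cte (s0 (S n)) * (fun y => X y (S n)))
       - (fct_cte (sm1 (S n)) * (fun y => X y n))) / fct_cte (s1 (S n)))%F u).
    assert (0 < X u (S n)) by (apply Hu; lia).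
    assert (0 < s1 (S n)) by (apply Hs1; lia).
    apply continuity_pt_div; [| apply Hcst | unfold fct_cte; lra].
    apply continuity_pt_minus; [apply continuity_pt_minus; [apply continuity_pt_minus|] |].
    + apply continuity_pt_div; [apply Hcst | exact C1 | lra].
    + apply Hcst.
    + apply continuity_pt_mult; [apply Hcst | exact C1].
    + apply continuity_pt_mult; [apply Hcst | exact C0].
Qed.

Lemma pos_upto_near u k : pos_upto u k -> near u (fun y => pos_upto y k).
Proof.
  induction k as [|k IH]; intros Hu.
  - exists 1. split; [lra|]. intros y _ i Hi. lia.
  - apply pos_upto_S in Hu as [Hk HSk].
    apply (near_weaken u (fun y => pos_upto y k /\ 0 < X y (S k))).
    + intros y Hy. now apply pos_upto_S.
    + apply near_and; [now apply IH|].
      apply (near_gt (fun y => X y (S k))); [apply (X_continuous u k Hk) | exact HSk].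
Qed.

Definition exits_at (u : R) (k : nat) : Prop := pos_upto u k /\ X u (S k) <= 0.

Lemma exits_at_unique u j k : exits_at u j -> exits_at u k -> j = k.
Proof.
  intros [Hj Xj] [Hk Xk].
  destruct (Nat.lt_total j k) as [Hlt|[Heq|Hlt]]; [| exact Heq |].
  - assert (0 < X u (S j)) by (apply Hk; lia). lra.
  - assert (0 < X u (S k)) by (apply Hj; lia). lra.
Qed.

Lemma pos_of_no_exit u : (forall k, ~ exits_at u k) -> forall k, pos_upto u k.
Proof.
  intros Hno k. induction k as [|k IH]; [intros i Hi; lia|].
  apply pos_upto_S. split; [exact IH|].
  destruct (Rle_or_lt (X u (S k)) 0) as [Hle|Hgt]; [|exact Hgt].
  exfalso. exact (Hno k (conj IH Hle)).
Qed.

(* Stability of the exit index: near x_1 = u, the first non-positive term is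
   either still x_{k+1}, or x_{k+1} has become small and positive, so that
   x_{k+2} is large and x_{k+3} negative. *)
Lemma exits_at_stable u k :
  exits_at u k -> near u (fun y => exits_at y k \/ exits_at y (S (S k))).
Proof.
  intros [Hpos Hexit].
  destruct (X_continuous u k Hpos) as [Ck CSk].
  set (B := Rabs (X u k) + 1).
  assert (HB : 0 <= B) by (pose proof (Rabs_pos (X u k)); unfold B; lra).
  assert (HK : 0 < threshold k B) by (now apply threshold_pos).
  assert (Hl : 0 < ell (S k)) by (apply Hell; lia).
  set (c := Rmin 1 (ell (S k) / threshold k B)).
  assert (Hc : 0 < c) by (apply Rmin_pos; [lra | now apply Rdiv_lt_0_compat]).
  assert (Hnear : near u (fun y => pos_upto y k /\ X y k < B /\ X y (S k) < c)).
  { apply near_and; [now apply pos_upto_near|].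
    apply near_and.
    - apply (near_lt (fun y => X y k)); [exact Ck|].
      pose proof (Rle_abs (X u k)). unfold B; lra.
    - apply (near_lt (fun y => X y (S k))); [exact CSk | lra]. }
  revert Hnear. apply near_weaken. intros y [Hy [HyB Hyc]].
  destruct (Rle_or_lt (X y (S k)) 0) as [Hle|Hgt]; [left; split; assumption | right].
  assert (Hc1 : c <= 1) by apply Rmin_l.
  assert (Hc2 : c <= ell (S k) / threshold k B) by apply Rmin_r.
  assert (Hthr : threshold k B * X y (S k) <= ell (S k)).
  { left. apply mul_lt_of_lt_div; [exact HK | lra]. }
  destruct (small_term_overshoot y k B ltac:(lra) ltac:(lra) Hthr) as [H2 H3].
  split; [|lra].
  apply pos_upto_S. split; [apply pos_upto_S; split; assumption | exact H2].
Qed.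

Definition sg (k : nat) : R := (-1) ^ k.

Lemma sg_S k : sg (S k) = - sg k.
Proof. unfold sg; simpl; ring. Qed.

Lemma sg_sq k : sg k * sg k = 1.
Proof. induction k as [|k IH]; [unfold sg; simpl; ring | rewrite sg_S; lra]. Qed.

Lemma sg_even k : Nat.Even k -> sg k = 1.
Proof. intros [m ->]. apply pow_1_even. Qed.

Lemma sg_odd k : Nat.Odd k -> sg k = -1.
Proof. intros [m ->]. rewrite Nat.add_1_r. apply pow_1_odd. Qed.

Definition gap (u v : R) (j : nat) : R := sg (S j) * (X v j - X u j).

(* Subtracting the two recurrences, the gap satisfies the linear relation
   sigma_{n,1} g_{n+1} = (sigma_{n,0} + ell_n / (x_n y_n)) g_n - sigma_{n,-1} g_{n-1}. *)
Lemma gap_rec u v m : 0 < X u (S m) -> 0 < X v (S m) ->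
  s1 (S m) * gap u v (S (S m)) =
  (s0 (S m) + ell (S m) / (X u (S m) * X v (S m))) * gap u v (S m) - sm1 (S m) * gap u v m.
Proof.
  intros Hu Hv. assert (0 < s1 (S m)) by (apply Hs1; lia).
  unfold gap. rewrite !X_rec, !sg_S. unfold rec_next. field. lra.
Qed.

(* Since both energies are bounded by ell_n, so is sigma_{n,0} x_n y_n: the
   coefficient of the gap relation is at least 2 sigma_{n,0}. *)
Lemma gap_coeff_ge u v m : pos_upto u (S (S m)) -> pos_upto v (S (S m)) ->
  s0 (S m) <= ell (S m) / (X u (S m) * X v (S m)).
Proof.
  intros Hu Hv.
  pose proof (energy_bound_pos u m Hu). pose proof (energy_bound_pos v m Hv).
  assert (0 < X u (S m)) by (apply Hu; lia).
  assert (0 < X v (S m)) by (apply Hv; lia).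
  assert (0 < s0 (S m)) by (apply Hs0; lia).
  apply div_ge_of_mul_le; [now apply Rmult_lt_0_compat|].
  assert (0 <= s0 (S m) * (X u (S m) - X v (S m)) ^ 2) by (apply Rmult_le_pos; [lra | apply pow2_ge_0]).
  nra.
Qed.

Lemma gap_growth u v k : 0 < u < v -> pos_upto u k -> pos_upto v k ->
  forall j, (j < k)%nat ->
  INR (S j) * (v - u) <= gap u v (S j) /\ v - u <= gap u v (S j) - gap u v j.
Proof.
  intros Huv Hu Hv j. induction j as [|j IH]; intros Hj.
  - unfold gap, sg. rewrite !X_1, !X_0. simpl. lra.
  - destruct IH as [IH1 IH2]; [lia|].
    assert (Hgap : v - u <= gap u v (S j)).
    { rewrite S_INR in IH1. pose proof (pos_INR j). nra. }
    destruct (sigma_le (S j)) as [Hb Ha]; [lia|].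
    assert (Hstep : v - u <= gap u v (S (S j)) - gap u v (S j)).
    { apply (increment_step (s1 (S j)) (sm1 (S j)) (s0 (S j))
               (ell (S j) / (X u (S j) * X v (S j))) _ (gap u v j));
        try assumption; try lra.
      - apply Hs1; lia.
      - apply Hsm1; lia.
      - apply gap_coeff_ge; apply (pos_upto_le _ _ k); assumption || lia.
      - apply gap_rec; [apply Hu | apply Hv]; lia. }
    split; [rewrite S_INR; lra | exact Hstep].
Qed.

Lemma gap_pos u v k : 0 < u < v -> pos_upto u k -> pos_upto v k -> 0 < gap u v (S k).
Proof.
  intros Huv Hu Hv. destruct k as [|j].
  - unfold gap, sg. rewrite !X_1. simpl. lra.
  - destruct (gap_growth u v (S j) Huv Hu Hv j ltac:(lia)) as [H1 H2].
    pose proof (pos_INR j). rewrite S_INR in H1.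
    destruct (sigma_le (S j)) as [Hb _]; [lia|].
    assert (0 < X u (S j)) by (apply Hu; lia).
    assert (0 < X v (S j)) by (apply Hv; lia).
    apply (positivity_step (s1 (S j)) (sm1 (S j)) (s0 (S j))
             (ell (S j) / (X u (S j) * X v (S j))) (gap u v j) (gap u v (S j))).
    + apply Hs1; lia.
    + apply Hsm1; lia.
    + exact Hb.
    + apply Rdiv_lt_0_compat; [apply Hell; lia | now apply Rmult_lt_0_compat].
    + nra.
    + lra.
    + now apply gap_rec.
Qed.

(* Initial values whose first non-positive term has odd index, resp. even index. *)
Definition exits_odd (u : R) : Prop := exists k, Nat.Even k /\ exits_at u k.
Definition exits_even (u : R) : Prop := exists k, Nat.Odd k /\ exits_at u k.

(* Every initial value exiting at an odd index lies below every one exiting at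
   an even index: otherwise the comparison lemma, applied up to the first
   exit, would make the earlier-exiting solution positive there. *)
Lemma exits_odd_lt_even a b : exits_odd a -> exits_even b -> a < b.
Proof.
  intros [k [Hk [Ha Xa]]] [k' [Hk' [Hb Xb]]].
  assert (Hb1 : 0 < b) by (rewrite <- (X_1 b); apply Hb; destruct Hk' as [m ->]; lia).
  destruct (Rlt_or_le a b) as [|Hba]; [assumption | exfalso].
  destruct (Rle_lt_or_eq_dec b a Hba) as [Hlt | <-].
  - destruct (Nat.lt_ge_cases k k') as [Hkk|Hkk].
    + pose proof (gap_pos b a k ltac:(lra) (pos_upto_le b k k' ltac:(lia) Hb) Ha) as G.
      unfold gap in G. rewrite !sg_S, sg_even in G by exact Hk.
      assert (0 < X b (S k)) by (apply Hb; lia). lra.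
    + assert (Hlt' : (k' < k)%nat).
      { destruct (Nat.eq_dec k' k) as [->|]; [|lia].
        exfalso. exact (Nat.Even_Odd_False k Hk Hk'). }
      pose proof (gap_pos b a k' ltac:(lra) Hb (pos_upto_le a k' k ltac:(lia) Ha)) as G.
      unfold gap in G. rewrite !sg_S, sg_odd in G by exact Hk'.
      assert (0 < X a (S k')) by (apply Ha; lia). lra.
  - pose proof (exits_at_unique b k k' (conj Ha Xa) (conj Hb Xb)) as ->.
    exact (Nat.Even_Odd_False k' Hk Hk').
Qed.

(* Both classes are open, since near u the exit index can only jump by 2. *)
Lemma exits_parity_open (P : nat -> Prop) u :
  (forall k, P k -> P (S (S k))) -> (exists k, P k /\ exits_at u k) ->
  near u (fun y => exists k, P k /\ exits_at y k).
Proof.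
  intros HP [k [Hk Hu]].
  generalize (exits_at_stable u k Hu). apply near_weaken.
  intros y [Hy|Hy]; [exists k | exists (S (S k))]; split; auto.
Qed.

Lemma exits_odd_open u : exits_odd u -> near u exits_odd.
Proof. apply exits_parity_open. intros k Hk. now apply Nat.Even_succ_succ. Qed.

Lemma exits_even_open u : exits_even u -> near u exits_even.
Proof. apply exits_parity_open. intros k Hk. now apply Nat.Odd_succ_succ. Qed.

(* x_1 = 0 exits at once; a large x_1 violates the energy bound, so x_2 < 0. *)
Lemma exits_odd_zero : exits_odd 0.
Proof.
  exists 0%nat. split; [now exists 0%nat|].
  split; [intros i Hi; lia | rewrite X_1; lra].
Qed.

Lemma exits_even_large : exits_even (ell 1%nat / s0 1%nat + 1).
Proof.
  set (b := ell 1%nat / s0 1%nat + 1).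
  assert (Hq : 0 < ell 1%nat / s0 1%nat) by (apply Rdiv_lt_0_compat; [apply Hell | apply Hs0]; lia).
  exists 1%nat. split; [now exists 0%nat|].
  split; [intros i Hi; replace i with 1%nat by lia; rewrite X_1; unfold b; lra|].
  left. apply (overshoot b 0).
  - rewrite X_1. unfold b; lra.
  - apply left_term_nonneg. now left.
  - rewrite X_1. apply sq_exceeds; [apply Hs0 | apply Hell | unfold b]; lia || lra.
Qed.

Lemma existence : exists u, forall n, (1 <= n)%nat -> 0 < X u n.
Proof.
  destruct (gap_point exits_odd exits_even) as [u [Hodd Heven]].
  - exists 0. exact exits_odd_zero.
  - eexists. exact exits_even_large.
  - exact exits_odd_lt_even.
  - exact exits_odd_open.
  - exact exits_even_open.
  - exists u. intros n Hn.
    assert (Hno : forall k, ~ exits_at u k).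
    { intros k Hk. destruct (Nat.Even_or_Odd k) as [He|Ho].
      - apply Hodd. now exists k.
      - apply Heven. now exists k. }
    apply (pos_of_no_exit u Hno n). lia.
Qed.

(* For two positive solutions u < v, the comparison lemma and the energy bounds
   give sigma_{n,0} (n (v - u))^2 <= sigma_{n,0} (y_n - x_n)^2 <= 4 ell_n. *)
Lemma gap_energy u v : 0 < u < v ->
  (forall n, (1 <= n)%nat -> 0 < X u n) -> (forall n, (1 <= n)%nat -> 0 < X v n) ->
  forall m, s0 (S m) * (INR (S m) * (v - u)) ^ 2 <= 4 * ell (S m).
Proof.
  intros Huv Hu Hv m.
  assert (Pu : forall k, pos_upto u k) by (intros k i Hi; apply Hu; lia).
  assert (Pv : forall k, pos_upto v k) by (intros k i Hi; apply Hv; lia).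
  destruct (gap_growth u v (S m) Huv (Pu _) (Pv _) m ltac:(lia)) as [Hg _].
  pose proof (energy_bound_pos u m (Pu _)).
  pose proof (energy_bound_pos v m (Pv _)).
  assert (Hs : 0 < s0 (S m)) by (apply Hs0; lia).
  assert (Hsq : (INR (S m) * (v - u)) ^ 2 <= (X v (S m) - X u (S m)) ^ 2).
  { assert (0 <= INR (S m) * (v - u)) by (apply Rmult_le_pos; [apply pos_INR | lra]).
    unfold gap in Hg.
    replace ((X v (S m) - X u (S m)) ^ 2)
      with ((sg (S (S m)) * (X v (S m) - X u (S m))) ^ 2)
      by (replace ((sg (S (S m)) * (X v (S m) - X u (S m))) ^ 2)
            with (sg (S (S m)) * sg (S (S m)) * (X v (S m) - X u (S m)) ^ 2) by ring;
          rewrite sg_sq; ring).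
    apply pow_incr. lra. }
  assert (0 <= s0 (S m) * (X v (S m) + X u (S m)) ^ 2) by (apply Rmult_le_pos; [lra | apply pow2_ge_0]).
  nra.
Qed.

Lemma uniqueness u v :
  (forall n, (1 <= n)%nat -> 0 < X u n) -> (forall n, (1 <= n)%nat -> 0 < X v n) -> u = v.
Proof.
  assert (Hlt : forall u v, 0 < u < v -> (forall n, (1 <= n)%nat -> 0 < X u n) ->
            (forall n, (1 <= n)%nat -> 0 < X v n) -> False).
  { intros a b Hab Ha Hb. set (d := b - a).
    destruct Hliminf as [_ Hfreq].
    destruct (Hfreq (d ^ 2 / 4) ltac:(unfold d; nra) 1%nat) as [n [Hn Hsmall]].
    destruct n as [|m]; [lia|].
    pose proof (gap_energy a b Hab Ha Hb m) as He. fold d in He.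
    assert (Hden : 0 < INR (S m) ^ 2 * s0 (S m)).
    { apply Rmult_lt_0_compat; [apply pow_lt, lt_0_INR; lia | apply Hs0; lia]. }
    assert (d ^ 2 / 4 <= ell (S m) / (INR (S m) ^ 2 * s0 (S m))); [|lra].
    apply div_ge_of_mul_le; [exact Hden | nra]. }
  intros Hu Hv.
  assert (0 < u) by (rewrite <- (X_1 u); apply Hu; lia).
  assert (0 < v) by (rewrite <- (X_1 v); apply Hv; lia).
  destruct (Rtotal_order u v) as [Huv|[Huv|Huv]]; [exfalso | exact Huv | exfalso].
  - apply (Hlt u v); [lra | exact Hu | exact Hv].
  - apply (Hlt v u); [lra | exact Hv | exact Hu].
Qed.
End PositiveSolution.

Theorem corollary5p7
  (ell s0 s1 sm1 kappa : nat -> R) (x0 : R)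
  (Hell : forall n : nat, (1 <= n)%nat -> 0 < ell n)
  (Hs0 : forall n : nat, (1 <= n)%nat -> 0 < s0 n)
  (Hs1 : forall n : nat, (1 <= n)%nat -> 0 < s1 n)
  (Hsm1 : forall n : nat, (1 <= n)%nat -> 0 < sm1 n)
  (Hsig : forall n : nat, (1 <= n)%nat -> Rmax (sm1 n) (s1 n) <= s0 n)
  (Hkappa : forall n : nat, (1 <= n)%nat -> 0 <= kappa n)
  (Hliminf : is_liminf (fun n : nat => ell n / (INR n ^ 2 * s0 n)) 0)
  (Hx0 : sm1 1%nat * x0 >= - kappa 1%nat) :
  exists! x1 : R, 0 < x1 /\
    forall n : nat, (1 <= n)%nat -> 0 < rec_seq ell s0 s1 sm1 kappa x0 x1 n.
Proof.
  destruct (existence ell s0 s1 sm1 kappa x0) as [x1 Hpos]; try assumption.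
  exists x1. split.
  - split; [exact (Hpos 1%nat (le_n 1)) | exact Hpos].
  - intros y [_ Hypos]. now apply (uniqueness ell s0 s1 sm1 kappa x0).
Qed.
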